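(* Let $g,r,d$ and ramification sequences $\alpha,\beta$ satisfy $\rho(g,r,d,\alpha,\beta)=0$. Then the EH group acts transitively on $YT(g,r,d,\alpha,\beta)$.
   Context: Ramification sequences: $\alpha=(\alpha_0,\dots,\alpha_r)$ integers with $d-r\ge\alpha_0\ge\cdots\ge\alpha_r\ge0$, $|\alpha|=\sum\alpha_i$; $g-d+r\ge0$; $\rho(g,r,d,\alpha,\beta)=g-(r+1)(g-d+r)-|\alpha|-|\beta|$. Skew diagram $\sigma(g,r,d,\alpha,\beta)$ (with $m=g-d+r$): rows $k=1,\dots,r+1$ numbered top to bottom, row $k$ consisting of boxes $(k,c)$ with $\alpha_0-\alpha_{r+1-k}<c\le\alpha_0+m+\beta_{k-1}$ (columns numbered left to right); it has $g$ boxes when $\rho=0$. $YT(g,r,d,\alpha,\beta)$ is the set of standard Young tableaux of this shape: bijective fillings with $1,\dots,g$ strictly increasing along rows (left to right) and columns (top to bottom). The distance between boxes $(i,j),(i',j')$ is $|i-i'|+|j-j'|$. For $1\le t<g$ and $a>0$, $\pi_{t,a}$ is the permutation of $YT(g,r,d,\alpha,\beta)$ exchanging the entries $t$ and $t+1$ in every tableau where they lie in different rows and different columns at distance exactly $a$, and fixing all other tableaux. The EH group is the subgroup of the symmetric group on $YT(g,r,d,\alpha,\beta)$ generated by all $\pi_{t,a}$. *)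

From mathcomp Require Import all_boot all_order all_algebra.
Unset Printing Implicit Defensive.

(* A box is a pair (row, column) of natural numbers; rows are numbered
   1..r+1 top to bottom, columns left to right. *)
Definition box := (nat * nat)%type.

Definition ram_seq (r d : nat) (al : seq nat) : Prop :=
  [/\ size al = r.+1, r <= d,
      (forall i, i < r.+1 -> nth 0 al i <= d - r) &
      (forall i j, i <= j -> j < r.+1 -> nth 0 al j <= nth 0 al i)].

Definition rho (g r d : nat) (al be : seq nat) : int :=
  (g%:Z - (r.+1)%:Z * (g%:Z - d%:Z + r%:Z) - (sumn al)%:Z - (sumn be)%:Z)%R.

(* The skew diagram sigma(g,r,d,alpha,beta), m = g - d + r (assumed >= 0):
   row k (1 <= k <= r+1) consists of the boxes (k,c) with
   alpha_0 - alpha_{r+1-k} < c <= alpha_0 + m + beta_{k-1}. *)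
Definition in_sigma (g r d : nat) (al be : seq nat) (b : box) : bool :=
  let: (k, c) := b in
  let m := g + r - d in
  [&& 1 <= k, k <= r.+1,
      nth 0 al 0 - nth 0 al (r.+1 - k) < c &
      c <= nth 0 al 0 + m + nth 0 be k.-1].

(* A filling with entries 1..g is encoded by the position map
   T : {ffun 'I_g -> box}, where T i is the box containing the entry i+1. *)
Definition filling (g : nat) := {ffun 'I_g -> box}.

Definition is_SYT (g r d : nat) (al be : seq nat) (T : filling g) : Prop :=
  [/\ (forall i, in_sigma g r d al be (T i)),
      injective T,
      (forall b, in_sigma g r d al be b -> exists i, T i = b),
      (forall i j : 'I_g, (T i).1 = (T j).1 -> (T i).2 < (T j).2 -> i < j) &
      (forall i j : 'I_g, (T i).2 = (T j).2 -> (T i).1 < (T j).1 -> i < j)].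

Definition YT (g r d : nat) (al be : seq nat) : Type :=
  {T : filling g | is_SYT g r d al be T}.

Definition box_dist (b b' : box) : nat :=
  (b.1 - b'.1) + (b'.1 - b.1) + ((b.2 - b'.2) + (b'.2 - b.2)).

(* pi_{t,a}: exchange the entries t and t+1 (indices t-1 and t) if their
   boxes lie in different rows and different columns at distance exactly a;
   otherwise leave the tableau unchanged. *)
Definition pi_ta (g : nat) (t a : nat) (T : filling g) : filling g :=
  match (insub t.-1 : option 'I_g), (insub t : option 'I_g) with
  | Some i, Some j =>
      if [&& (T i).1 != (T j).1, (T i).2 != (T j).2 & box_dist (T i) (T j) == a]
      then [ffun x => if x == i then T j else if x == j then T i else T x]
      else T
  | _, _ => T
  end.

Definition EH_gen (g : nat) (ta : nat * nat) : bool :=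
  [&& 1 <= ta.1, ta.1 < g & 0 < ta.2].

Definition act_word (g : nat) (w : seq (nat * nat)) (T : filling g) : filling g :=
  foldl (fun U ta => pi_ta g ta.1 ta.2 U) T w.

From mathcomp Require Import all_boot all_order all_algebra all_fingroup.
From mathcomp Require Import zify.

Set Implicit Arguments.
Unset Strict Implicit.

(* Bubble sort. Any two standard fillings T, T' of the same boxes differ by a
   permutation of the entries, T = T' o s. Moving the entry that belongs at
   position p down to p by adjacent transpositions never breaks standardness:
   the two boxes exchanged at each step always lie in different rows and
   different columns, since otherwise standardness of T' or of the current
   filling would be violated. Each such transposition is a generator pi_{t,a}
   with a the distance of the two boxes. *)

Lemma box_dist_gt0 (b b' : box) : b.1 != b'.1 -> 0 < box_dist b b'.
Proof. by rewrite /box_dist => /eqP; lia. Qed.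

Lemma act_word_cat g (w1 w2 : seq (nat * nat)) (T : filling g) :
  act_word g (w1 ++ w2) T = act_word g w2 (act_word g w1 T).
Proof. exact: foldl_cat. Qed.

Section StandardFillings.

Variable g : nat.
Implicit Types (U V : filling g) (s : {perm 'I_g}).

Definition increasing_along (f1 f2 : box -> nat) U :=
  forall a b : 'I_g, f1 (U a) = f1 (U b) -> f2 (U a) < f2 (U b) -> a < b.

Definition standard U := increasing_along fst snd U /\ increasing_along snd fst U.

Definition permute_fill s U : filling g := [ffun a => U (s a)].

Lemma permute_fill1 U : permute_fill 1 U = U.
Proof. by apply/ffunP => a; rewrite ffunE perm1. Qed.

Lemma permute_fillM s s' U :
  permute_fill (s' * s) U = permute_fill s' (permute_fill s U).
Proof. by apply/ffunP => a; rewrite !ffunE permM. Qed.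

Lemma permute_fill_of_image U V : injective U ->
  (forall a, exists b, V b = U a) -> exists s, U = permute_fill s V.
Proof.
move=> injU /fin_all_exists[f Vf].
have injf : injective f by move=> a b fab; apply: injU; rewrite -!Vf fab.
by exists (perm injf); apply/ffunP => a; rewrite ffunE permE Vf.
Qed.

Lemma pi_ta_adjacent (i k : 'I_g) U : k = i.+1 :> nat ->
  (U i).1 != (U k).1 -> (U i).2 != (U k).2 ->
  pi_ta g k (box_dist (U i) (U k)) U = permute_fill (tperm i k) U.
Proof.
move=> ki row_ne col_ne; rewrite /pi_ta.
have -> : (k : nat).-1 = i by rewrite ki.
rewrite !valK row_ne col_ne eqxx /=; apply/ffunP => a; rewrite !ffunE.
by case: tpermP => [->|->|/eqP/negbTE-> /eqP/negbTE->]; rewrite ?eqxx //;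
   case: eqP => // ->.
Qed.

Lemma EH_gen_adjacent (i k : 'I_g) U : k = i.+1 :> nat ->
  (U i).1 != (U k).1 -> EH_gen g (nat_of_ord k, box_dist (U i) (U k)).
Proof.
by move=> ki /box_dist_gt0 dist_gt0; rewrite /EH_gen /= ltn_ord ki dist_gt0.
Qed.

Lemma increasing_along_tperm f1 f2 (i k : 'I_g) U : k = i.+1 :> nat ->
  f1 (U i) <> f1 (U k) -> increasing_along f1 f2 U ->
  increasing_along f1 f2 (permute_fill (tperm i k) U).
Proof.
move=> ki f1_ne incU a b; rewrite !ffunE => e1 e2.
have {e2} lt_ab := incU _ _ e1 e2.
have ne (x y : 'I_g) : x <> y -> x <> y :> nat by move=> xy /val_inj.
case: (tpermP i k a) (tpermP i k b) lt_ab e1 => [->|->|/ne ai /ne ak]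
  [->|->|/ne bi /ne bk]; rewrite ?ltnn //; lia.
Qed.

Lemma adjacent_separated f1 f2 V s (P i k : 'I_g) :
  (forall b b' : box, f1 b = f1 b' -> f2 b = f2 b' -> b = b') ->
  injective V -> increasing_along f1 f2 V ->
  increasing_along f1 f2 (permute_fill s V) ->
  (forall a : 'I_g, a < P -> s a = a) -> s k = P -> k = i.+1 :> nat -> P <= i ->
  f1 (permute_fill s V i) <> f1 (permute_fill s V k).
Proof.
move=> coords_inj injV incV incU fixP skP ki Pi e1.
have ki_lt := incU k i (esym e1); rewrite !ffunE in e1 ki_lt.
case: (ltngtP (f2 (V (s i))) (f2 (V (s k)))) => [lt_ik|/ki_lt|].
- (* The box V (s i) lies on the line of V P before it, so s i < P is fixed by s. *)
  rewrite skP in e1 lt_ik; have si_P := incV _ _ e1 lt_ik.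
  by move: (fixP _ si_P) => /perm_inj si_i; move: si_P; rewrite si_i; lia.
- lia.
- by move=> /(coords_inj _ _ e1)/injV/perm_inj ik; move: ki; rewrite ik; lia.
Qed.

Definition sorted_below V (p : nat) s :=
  standard (permute_fill s V) /\ forall a : 'I_g, a < p -> s a = a.

Lemma sorted_below_tperm V s (P i k : 'I_g) : injective V -> standard V ->
  sorted_below V P s -> s k = P -> k = i.+1 :> nat -> P <= i ->
  [/\ EH_gen g (nat_of_ord k, box_dist (permute_fill s V i) (permute_fill s V k)),
      pi_ta g k (box_dist (permute_fill s V i) (permute_fill s V k))
        (permute_fill s V) = permute_fill (tperm i k * s) V &
      sorted_below V P (tperm i k * s)].
Proof.
move=> injV [row_incV col_incV] [[row_incU col_incU] fixP] skP ki Pi.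
have pair_inj (b b' : box) : b.1 = b'.1 -> b.2 = b'.2 -> b = b'.
  by case: b b' => [x y] [x' y'] /= -> ->.
have row_ne := adjacent_separated pair_inj injV row_incV row_incU fixP skP ki Pi.
have col_ne : (permute_fill s V i).2 <> (permute_fill s V k).2.
  apply: (adjacent_separated (f2 := fst) _ injV col_incV col_incU fixP skP ki Pi).
  by move=> b b' e2 e1; apply: pair_inj.
rewrite permute_fillM pi_ta_adjacent ?EH_gen_adjacent //; try exact/eqP.
split=> //; split.
  by rewrite permute_fillM; split; exact: increasing_along_tperm.
move=> a lt_aP; rewrite permM tpermD ?fixP //; apply/eqP=> e; move: lt_aP;
  rewrite -e; lia.
Qed.

Lemma bubble_down V s (P k : 'I_g) : injective V -> standard V ->
  sorted_below V P s -> s k = P ->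
  exists w s', [/\ all (EH_gen g) w,
    act_word g w (permute_fill s V) = permute_fill s' V & sorted_below V P.+1 s'].
Proof.
move=> injV stdV sortedP skP.
have le_Pk : P <= k.
  rewrite leqNgt; apply/negP => lt_kP.
  by move: lt_kP (sortedP.2 _ lt_kP); rewrite skP => + Pk; rewrite -Pk ltnn.
move: (k - P) (subnKC le_Pk) => n; elim: n k s sortedP skP {le_Pk}.
  move=> k s [stdU fixP] skP /eqP; rewrite addn0 => /eqP/val_inj Pk.
  exists [::], s; split=> //; split=> // a.
  by rewrite ltnS leq_eqVlt => /orP[/eqP/val_inj->|/fixP//]; rewrite {1}Pk skP.
move=> n IH k s sortedP skP kPn.
have lt_i_g : k.-1 < g by rewrite (leq_ltn_trans (leq_pred k)).
pose i := Ordinal lt_i_g.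
have ki : k = i.+1 :> nat by rewrite /= -kPn addnS.
have Pi : P <= i by rewrite /= -kPn addnS leq_addr.
have [EH_k pi_k sorted_i] := sorted_below_tperm injV stdV sortedP skP ki Pi.
have s'iP : (tperm i k * s)%g i = P by rewrite permM tpermL.
have iPn : P + n = i by rewrite /= -kPn addnS.
have [w [s' [EH_w act_w sorted']]] := IH i _ sorted_i s'iP iPn.
exists ((nat_of_ord k, box_dist (permute_fill s V i) (permute_fill s V k)) :: w), s'.
by split; rewrite //= ?EH_k // -act_w -pi_k.
Qed.

Lemma sort_filling V s : injective V -> standard V -> standard (permute_fill s V) ->
  exists w, all (EH_gen g) w /\ act_word g w (permute_fill s V) = V.
Proof.
move=> injV stdV stdU.
suff /(_ g (leqnn g)) [w [s' [EH_w act_w [_ fix_s']]]] : forall p, p <= g ->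
    exists w s', [/\ all (EH_gen g) w,
      act_word g w (permute_fill s V) = permute_fill s' V & sorted_below V p s'].
  have s'1 : s' = 1%g by apply/permP => a; rewrite perm1 fix_s'.
  by exists w; rewrite act_w s'1 permute_fill1.
elim=> [|p IH] lt_p_g; first by exists [::], s.
have [w [s' [EH_w act_w sortedp]]] := IH (ltnW lt_p_g).
pose P := Ordinal lt_p_g.
have [w' [s'' [EH_w' act_w' sortedp']]] :=
  bubble_down (P := P) injV stdV sortedp (permKV s' P).
exists (w ++ w'), s''.
by rewrite all_cat EH_w EH_w' act_word_cat act_w act_w'.
Qed.

End StandardFillings.

Theorem proposition4p1 (g r d : nat) (al be : seq nat) :
  ram_seq r d al -> ram_seq r d be ->
  d <= g + r ->
  rho g r d al be = 0%R ->
  forall T T' : filling g,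
    is_SYT g r d al be T -> is_SYT g r d al be T' ->
    exists w : seq (nat * nat), all (EH_gen g) w /\ act_word g w T = T'.
Proof.
move=> _ _ _ _ T T' [inT injT _ row_incT col_incT] [_ injT' ontoT' row_incT' col_incT'].
have [s defT] := permute_fill_of_image (V := T') injT (fun a => ontoT' _ (inT a)).
rewrite defT in row_incT col_incT *.
exact: sort_filling injT' (conj row_incT' col_incT') (conj row_incT col_incT).
Qed.
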